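(* Under the assumption $\mathrm{rank}(D_{\mathrm{ac}})<n$ (the adversary does not have access to all the communication channels between the two side filters), the residual signal $res_{\mathrm{SA}}(t)=y_{\mathrm{p}}(t)-C\hat{x}^{\mathrm{SA}}(t)$ is affected by the sensor cyber attack $a_{\mathrm{y}}(t)$ and is decoupled from $a_{\mathrm{u}}(t)$, $f_1(t)$ and $f_2(t)$ (i.e. its trajectory is not affected by these signals), if, for $\ell=\mathrm{SA}$: $T^{\ell}=I-H^{\ell}C$; $(I-H^{\ell}C)F_1=0$; $(I-H^{\ell}C)F_2=0$; $L^{\ell}D_{\mathrm{ac}}=0$; $L_{\mathrm{p}}^{\ell}D_{\mathrm{ac}}=0$; the triplet $(C,F^{\ell},L^{\ell})$ is left-invertible; $\check{F}^{\ell}=\begin{bmatrix}F^{\ell} & -L^{\ell}\\ 0 & F_{\mathrm{p}}^{\ell}+L_{\mathrm{p}}^{\ell}\end{bmatrix}$ is Hurwitz; and moreover: 1) $T_{\mathrm{p}}^{\mathrm{SA}}B_{\mathrm{a}}=0$; 2) the Rosenbrock system matrix $$P_{\Sigma_{\mathrm{y}}}(s)=\begin{bmatrix} sI-(F_{\mathrm{p}}^{\mathrm{SA}}+L_{\mathrm{p}}^{\mathrm{SA}}) & K_{\mathrm{p}}^{\mathrm{SA}}D_{\mathrm{a}}\\ L^{\mathrm{SA}} & 0_{(n+p_{\mathrm{f}}+p)\times p_{\mathrm{a}}}\end{bmatrix}$$ does not have any non-minimum phase zero dynamics; and 3) $\mathrm{rank}(L^{\mathrm{SA}}K_{\mathr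m{p}}^{\mathrm{SA}}D_{\mathrm{a}})=\mathrm{rank}(K_{\mathrm{p}}^{\mathrm{SA}}D_{\mathrm{a}})$.
   Context: Consider the augmented LTI cyber-physical system $\dot{x}(t)=Ax(t)+Bu(t)+B_{\mathrm{a}}a_{\mathrm{u}}(t)+F_1f_1(t)+F_2f_2(t)+N\omega(t)$, with $x(t)\in\mathbb{R}^{n+p_{\mathrm{f}}+p}$ (plant state of dimension $n$ augmented with a pseudo-actuator-fault subsystem representing sensor faults and noise), where $u(t)$ is the control command, $a_{\mathrm{u}}(t)\in\mathbb{R}^{m_{\mathrm{a}}}$ an actuator cyber attack, $f_1(t)$ an actuator fault, $f_2(t)$ a pseudo actuator fault (representing sensor faults), $\omega(t)$ noise. The plant-side measured output is $y_{\mathrm{p}}(t)=Cx(t)$ and the command-and-control (C\&C) side output is $y^*(t)=Cx(t)+D_{\mathrm{a}}a_{\mathrm{y}}(t)$ with $a_{\mathrm{y}}(t)\in\mathbb{R}^{p_{\mathrm{a}}}$ a sensor cyber attack; on the plant side the manipulated input satisfies $Bu^*(t)=Bu(t)+B_{\mathrm{a}}a_{\mathrm{u}}(t)$. For an index $\ell$, a C\&C side filter $\dot{z}_{\mathrm{c}}^{\ell}=F_{\mathrm{p}}^{\ell}z_{\mathrm{c}}^{\ell}+T_{\mathrm{p}}^{\ell}Bu+K_{\mathrm{p}}^{\ell}y^*$ and a plant side filter $\dot{z}_{\mathrm{p}}^{\ell}=F_{\mathrm{p}}^{\ell}z_{\mathrm{p}}^{\ell}+T_{\mathrm{p}}^{\ell}Bu^*+K_{\mathrm{p}}^{\ell}y_{\mathrm{p}}+L_{\mathrm{p}}^{\ell}(z_{\mathrm{p}}^{\ell}-(z_{\mathrm{c}}^{\ell}+D_{\mathrm{ac}}a_{\mathrm{c}}))$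 are used, where $a_{\mathrm{c}}(t)$ is a cyber attack on the communication link carrying $z_{\mathrm{c}}^{\ell}$ to the plant side, with signature $D_{\mathrm{ac}}$. A plant-side unknown-input-observer detector is $\dot{z}^{\ell}=F^{\ell}z^{\ell}+T^{\ell}Bu^*+K^{\ell}y_{\mathrm{p}}+L^{\ell}(z_{\mathrm{p}}^{\ell}-(z_{\mathrm{c}}^{\ell}+D_{\mathrm{ac}}a_{\mathrm{c}}))$, $\hat{x}^{\ell}=z^{\ell}+H^{\ell}y_{\mathrm{p}}$, with $K^{\ell}=K_1^{\ell}+K_2^{\ell}$, $F^{\ell}=A-H^{\ell}CA-K_1^{\ell}C$, $K_2^{\ell}=F^{\ell}H^{\ell}$. The error $e^{\ell}=x-\hat{x}^{\ell}$ and filter discrepancy $e_{\mathrm{p}}^{\ell}=z_{\mathrm{p}}^{\ell}-z_{\mathrm{c}}^{\ell}$ form the augmented error $\check{e}^{\ell}=[e^{\ell\top},e_{\mathrm{p}}^{\ell\top}]^\top$ whose state matrix is $\check{F}^{\ell}$. The residual is $res_{\ell}(t)=y_{\mathrm{p}}(t)-C\hat{x}^{\ell}(t)=Ce^{\ell}(t)$. The adversary knows all filter and detector parameters. The index $\mathrm{SA}$ denotes the filters/detector designed for sensor attack detection. *)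

From HB Require Import structures.
From mathcomp Require Import all_boot all_order all_algebra.
From mathcomp Require Import all_classical all_reals all_analysis.
Set Implicit Arguments. Unset Strict Implicit. Unset Printing Implicit Defensive.
Import Order.TTheory GRing.Theory Num.Theory.
Local Open Scope classical_set_scope.
Local Open Scope ring_scope.

Section Defs.
Variable R : realType.

Definition has_deriv (k : nat) (x : R -> 'cV[R]_k) (t : R) (v : 'cV[R]_k) : Prop :=
  forall i : 'I_k, is_derive t 1 (fun s => x s i ord0) (v i ord0).

(* M is Hurwitz: every (complex) eigenvalue a + i b of M has a < 0.  The
   complex eigenvector u + i w is written through its real and imaginary
   parts: M (u + i w) = (a + i b)(u + i w). *)
Definition hurwitz (k : nat) (M : 'M[R]_k) : Prop :=
  forall (a b : R) (u w : 'cV[R]_k), (u != 0 \/ w != 0) ->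
    M *m u = a *: u - b *: w -> M *m w = b *: u + a *: w -> a < 0.

(* The triplet (C, F, L), i.e. the system  e' = F e + L v,  y = C e, is left
   invertible: the input-output map (zero initial state) is injective. *)
Definition left_invertible (k r m : nat) (C : 'M[R]_(r, k)) (F : 'M[R]_k)
    (L : 'M[R]_(k, m)) : Prop :=
  forall (v : R -> 'cV[R]_m) (e : R -> 'cV[R]_k),
    e 0 = 0 ->
    (forall t, 0 <= t -> has_deriv e t (F *m e t + L *m v t)) ->
    (forall t, 0 <= t -> C *m e t = 0) ->
    forall t, 0 <= t -> v t = 0.

(* The system  xi' = M xi + G v,  w = Cz xi  (Rosenbrock system matrix
   [[sI - M, -G], [Cz, 0]]) has no non-minimum phase zero dynamics: every
   state trajectory along which the output is identically zero converges
   to 0. *)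
Definition no_nmp_zero_dynamics (k m r : nat) (M : 'M[R]_k) (G : 'M[R]_(k, m))
    (Cz : 'M[R]_(r, k)) : Prop :=
  forall (v : R -> 'cV[R]_m) (xi : R -> 'cV[R]_k),
    (forall t, 0 <= t -> has_deriv xi t (M *m xi t + G *m v t)) ->
    (forall t, 0 <= t -> Cz *m xi t = 0) ->
    forall i : 'I_k, (fun t => xi t i ord0) @ +oo%R --> (0 : R^o).

(* Plant / attack model (dimensions: state N = n+pf+p, control mu, actuator
   attack ma, faults q1 q2, noise qw, outputs ny, sensor attack pa,
   filter state nz, communication attack mc). *)
Record plant (N mu ma q1 q2 qw ny pa nz mc : nat) := Plant {
  pA : 'M[R]_N; pB : 'M[R]_(N, mu); pBa : 'M[R]_(N, ma);
  pF1 : 'M[R]_(N, q1); pF2 : 'M[R]_(N, q2); pN : 'M[R]_(N, qw);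
  pC : 'M[R]_(ny, N); pDa : 'M[R]_(ny, pa); pDac : 'M[R]_(nz, mc) }.

Record design (N ny nz : nat) := Design {
  dFp : 'M[R]_nz; dTp : 'M[R]_(nz, N); dKp : 'M[R]_(nz, ny); dLp : 'M[R]_nz;
  dF : 'M[R]_N; dT : 'M[R]_N; dK : 'M[R]_(N, ny); dK1 : 'M[R]_(N, ny);
  dK2 : 'M[R]_(N, ny); dH : 'M[R]_(N, ny); dL : 'M[R]_(N, nz) }.

Record signals (mu ma q1 q2 qw pa mc : nat) := Signals {
  su : R -> 'cV[R]_mu; sau : R -> 'cV[R]_ma; say : R -> 'cV[R]_pa;
  sac : R -> 'cV[R]_mc; sf1 : R -> 'cV[R]_q1; sf2 : R -> 'cV[R]_q2;
  sw : R -> 'cV[R]_qw }.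

Variables (N mu ma q1 q2 qw ny pa nz mc : nat).
Variables (P : plant N mu ma q1 q2 qw ny pa nz mc) (D : design N ny nz).

(* (x, zc, zp, z) is a trajectory (for t >= 0) of the closed system formed by
   the plant, the C&C side filter, the plant side filter and the detector,
   under the signals S. *)
Definition trajectory (S : signals mu ma q1 q2 qw pa mc)
    (x : R -> 'cV[R]_N) (zc zp : R -> 'cV[R]_nz) (z : R -> 'cV[R]_N) : Prop :=
  forall t, 0 <= t ->
  let Bu := pB P *m su S t in
  let Bustar := pB P *m su S t + pBa P *m sau S t in
  let yp := pC P *m x t in
  let ystar := pC P *m x t + pDa P *m say S t in
  let disc := zp t - (zc t + pDac P *m sac S t) in
  [/\ has_deriv x t (pA P *m x t + pB P *m su S t + pBa P *m sau S t
                      + pF1 P *m sf1 S t + pF2 P *m sf2 S t + pN P *m sw S t),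
      has_deriv zc t (dFp D *m zc t + dTp D *m Bu + dKp D *m ystar),
      has_deriv zp t (dFp D *m zp t + dTp D *m Bustar + dKp D *m yp
                      + dLp D *m disc)
    & has_deriv z t (dF D *m z t + dT D *m Bustar + dK D *m yp + dL D *m disc)].

Definition residual (x z : R -> 'cV[R]_N) (t : R) : 'cV[R]_ny :=
  pC P *m x t - pC P *m (z t + dH D *m (pC P *m x t)).

End Defs.

From HB Require Import structures.
From mathcomp Require Import all_boot all_order all_algebra.
From mathcomp Require Import all_classical all_reals all_analysis.
From mathcomp Require Import ring lra.
Import Order.TTheory GRing.Theory Num.Theory.
Local Open Scope ring_scope.

(* Along a trajectory, the filter discrepancy e_p = z_p - z_c obeys
   e_p' = (F_p + L_p) e_p - K_p D_a a_y, and the detector error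
   e = (I - H C) x - z obeys e' = F e - L e_p + (I - H C) N w: the design
   conditions cancel every occurrence of a_u, f_1, f_2 and a_c, the cancellation
   in e resting on the UIO identity F (I - H C) = (I - H C) A - K C.  The
   residual is C e.  For two runs with equal noise and initial states, the
   differences of (e, e_p) start at 0 and are driven only by the difference of
   the sensor attacks.  If the sensor attacks agree, the differences vanish by
   uniqueness for linear ODEs (a Gronwall estimate on the squared norm), hence
   so does the difference of the residuals.  If the residuals agree, left
   invertibility of (C, F, L) forces the difference of e_p to vanish, and its
   derivative then shows that K_p D_a a_y is the same in both runs. *)

Section HasDeriv.
Context {R : realType} {k : nat}.
Implicit Types (x y : R -> 'cV[R]_k) (t : R) (u v : 'cV[R]_k).

Lemma has_deriv_eq x t u v : has_deriv x t u -> u = v -> has_deriv x t v.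
Proof. by move=> ? <-. Qed.

Lemma has_derivD x y t u v :
  has_deriv x t u -> has_deriv y t v -> has_deriv (fun s => x s + y s) t (u + v).
Proof.
move=> dx dy i; rewrite mxE.
have -> : (fun s => (x s + y s) i ord0) = (fun s => x s i ord0) + (fun s => y s i ord0).
  by apply/funext => s; rewrite mxE.
exact: is_deriveD.
Qed.

Lemma has_derivN x t u : has_deriv x t u -> has_deriv (fun s => - x s) t (- u).
Proof.
move=> dx i; rewrite mxE.
have -> : (fun s => (- x s) i ord0) = - (fun s => x s i ord0).
  by apply/funext => s; rewrite mxE.
exact: is_deriveN.
Qed.

Lemma has_derivB x y t u v :
  has_deriv x t u -> has_deriv y t v -> has_deriv (fun s => x s - y s) t (u - v).
Proof. by move=> dx dy; apply: has_derivD => //; apply: has_derivN. Qed.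

Lemma has_deriv_mulmx l (M : 'M[R]_(l, k)) x t v :
  has_deriv x t v -> has_deriv (fun s => M *m x s) t (M *m v).
Proof.
move=> dx i; rewrite mxE.
have -> : (fun s => (M *m x s) i ord0) = \sum_j M i j \*: (fun s => x s j ord0).
  by apply/funext => s; rewrite mxE fct_sumE.
by apply: is_derive_sum => j; apply: is_deriveZ.
Qed.

Lemma is_derive_right_eq0 (f : R -> R) t l :
  (forall s, t <= s -> f s = 0) -> is_derive t 1 f l -> l = 0.
Proof.
move=> f0 [df <-].
rewrite /derive cvg_at_rightE; last exact: df.
rewrite (@lim_near_cst _ _ _ _ _ 0) //; near=> h.
rewrite /= !f0 ?subrr ?scaler0 // /GRing.scale /= mulr1 lerDr.
by apply: ltW; near: h; exact: nbhs_right_gt.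
Unshelve. all: by end_near.
Qed.

Lemma has_deriv_right_eq0 x t v :
  (forall s, t <= s -> x s = 0) -> has_deriv x t v -> v = 0.
Proof.
move=> x0 dx; apply/matrixP => i j; rewrite (ord1 j) mxE.
by apply: is_derive_right_eq0 (dx i) => s /x0 ->; rewrite mxE.
Qed.

End HasDeriv.
Arguments has_deriv_eq {R k x t u v}.
Arguments has_derivD {R k x y t u v}.
Arguments has_derivN {R k x t u}.
Arguments has_derivB {R k x y t u v}.
Arguments has_deriv_mulmx {R k l} M {x t v}.
Arguments has_deriv_right_eq0 {R k x t v}.

Section SquaredNorm.
Context {R : realType} {k : nat}.
Implicit Types (v : 'cV[R]_k).

Definition sqnorm v : R := \sum_i v i ord0 ^+ 2.

Lemma sqnorm_ge0 v : 0 <= sqnorm v.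
Proof. by apply: sumr_ge0 => i _; rewrite sqr_ge0. Qed.

Lemma sqr_coord_le_sqnorm v i : v i ord0 ^+ 2 <= sqnorm v.
Proof. by rewrite /sqnorm (bigD1 i) //= lerDl sumr_ge0 // => j _; rewrite sqr_ge0. Qed.

Lemma sqnorm_eq0 v : sqnorm v = 0 -> v = 0.
Proof.
move=> /psumr_eq0P v0; apply/matrixP => i j; rewrite (ord1 j) mxE.
by apply/eqP; rewrite -sqrf_eq0 v0 // => l _; rewrite sqr_ge0.
Qed.

Lemma dot_mulmx_le (M : 'M[R]_k) v :
  \sum_i v i ord0 * (M *m v) i ord0 <= (\sum_i \sum_j `|M i j|) * sqnorm v.
Proof.
rewrite mulr_suml; apply: ler_sum => i _.
rewrite mxE mulr_sumr mulr_suml; apply: ler_sum => j _.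
have vij : `|v i ord0 * v j ord0| <= sqnorm v.
  have := sqr_coord_le_sqnorm v i; have := sqr_coord_le_sqnorm v j.
  by rewrite ler_norml => ? ?; apply/andP; split; nra.
by rewrite mulrCA (le_trans (ler_norm _)) // normrM ler_wpM2l.
Qed.

Lemma has_deriv_sqnorm (x : R -> 'cV[R]_k) t u : has_deriv x t u ->
  is_derive t 1 (fun s => sqnorm (x s)) (2 * \sum_i x t i ord0 * u i ord0).
Proof.
move=> dx.
have -> : (fun s => sqnorm (x s)) = \sum_i (fun s => x s i ord0) ^+ 2.
  by apply/funext => s; rewrite fct_sumE; apply: eq_bigr => i _; rewrite exprfctE.
apply: is_derive_eq (is_derive_sum (fun i => is_deriveX 2 (dx i))) _.
by rewrite mulr_sumr; apply: eq_bigr => i _; rewrite expr1 [in LHS]/GRing.scale /= mulrA.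
Qed.

End SquaredNorm.

Lemma gronwall_nonpos {R : realType} (g g' : R -> R) (c : R) :
  g 0 = 0 -> (forall t : R, 0 <= t -> is_derive t 1 g (g' t)) ->
  (forall t, 0 <= t -> g' t <= c * g t) -> forall t, 0 <= t -> g t <= 0.
Proof.
move=> g0 dg g'le t t0.
pose w s := expR (- (c * s)).
have dw (s : R) : is_derive s 1 w (w s * - c).
  apply: is_derive1_comp; apply: is_derive_eq (is_deriveN (is_deriveZ c (is_derive_id s 1))) _.
  by rewrite /GRing.scale /= mulr1.
pose h := g * w.
have dh (s : R) : 0 <= s -> is_derive s 1 h (g s *: (w s * - c) + w s *: g' s).
  by move=> s0; apply: is_deriveM (dg s s0) (dw s).
have : h t <= h 0.
  apply: (@ler0_derive1_nincry _ h 0) => // [s|s|].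
  - by rewrite in_itv /= andbT => /ltW s0; have [] := dh s s0.
  - rewrite in_itv /= andbT => /ltW s0; rewrite derive1E; have [_ ->] := dh s s0.
    have := g'le s s0; have := expR_gt0 (- (c * s)); rewrite /GRing.scale /= /w; nra.
  - apply: derivable_within_continuous => s; rewrite in_itv /= andbT => s0.
    by have [] := dh s s0.
rewrite /h !mulrfctE g0 mul0r; have := expR_gt0 (- (c * t)); rewrite /w; nra.
Qed.

Lemma linear_ode_zero {R : realType} {k : nat} {M : 'M[R]_k} {x : R -> 'cV[R]_k} :
  x 0 = 0 -> (forall t, 0 <= t -> has_deriv x t (M *m x t)) ->
  forall t, 0 <= t -> x t = 0.
Proof.
move=> x0 dx t t0; apply: sqnorm_eq0; apply/eqP; rewrite eq_le sqnorm_ge0 andbT.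
apply: (@gronwall_nonpos _ (fun s => sqnorm (x s)) _ (2 * \sum_i \sum_j `|M i j|) _ _ _ t t0).
- by rewrite x0 /sqnorm big1 // => i _; rewrite mxE expr0n.
- by move=> s s0; apply: has_deriv_sqnorm (dx s s0).
- by move=> s _; rewrite -mulrA ler_pM2l // dot_mulmx_le.
Qed.

(* Once products are distributed and left-associated, a linear identity between
   matrix expressions holds entrywise with the products as opaque atoms. *)
Ltac mx_linear :=
  rewrite ?(mulmxDr, mulmxBr, mulmxDl, mulmxBl, mulmxN, mulNmx, mulmx1, mul1mx, mul0mx,
    mulmx0, mulmxA);
  apply/matrixP => i j; rewrite !mxE; lra.

Section ResidualSA.
Context {R : realType} {N mu ma q1 q2 qw ny pa nz mc : nat}.
Context {P : plant R N mu ma q1 q2 qw ny pa nz mc} {D : design R N ny nz}.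

Local Notation T := (1%:M - dH D *m pC P).

Definition uio_error (x z : R -> 'cV[R]_N) (t : R) : 'cV[R]_N := T *m x t - z t.

Lemma residualE x z t : residual P D x z t = pC P *m uio_error x z t.
Proof. by rewrite /residual /uio_error; mx_linear. Qed.

Hypothesis K_split : dK D = dK1 D + dK2 D.
Hypothesis F_def : dF D = pA P - dH D *m pC P *m pA P - dK1 D *m pC P.
Hypothesis K2_def : dK2 D = dF D *m dH D.

Lemma uio_design_eq : dF D *m T = T *m pA P - dK D *m pC P.
Proof. by rewrite K_split K2_def F_def; mx_linear. Qed.

Hypothesis T_def : dT D = T.
Hypothesis F1_decoupled : T *m pF1 P = 0.
Hypothesis F2_decoupled : T *m pF2 P = 0.
Hypothesis L_Dac : dL D *m pDac P = 0.
Hypothesis Lp_Dac : dLp D *m pDac P = 0.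
Hypothesis Tp_Ba : dTp D *m pBa P = 0.

Section OneTrajectory.
Context {S : signals R mu ma q1 q2 qw pa mc} {x z : R -> 'cV[R]_N} {zc zp : R -> 'cV[R]_nz}.
Hypothesis traj : trajectory P D S x zc zp z.

Lemma filter_gap_deriv (t : R) : 0 <= t ->
  has_deriv (fun s => zp s - zc s) t
    ((dFp D + dLp D) *m (zp t - zc t) - dKp D *m pDa P *m say S t).
Proof.
move=> t0; have [_ dzc dzp _] := traj _ t0.
apply: has_deriv_eq (has_derivB dzp dzc) _.
by rewrite !(mulmxDr, mulmxN, mulmxA) Tp_Ba Lp_Dac; mx_linear.
Qed.

Lemma uio_error_deriv (t : R) : 0 <= t ->
  has_deriv (uio_error x z) t
    (dF D *m uio_error x z t - dL D *m (zp t - zc t) + T *m pN P *m sw S t).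
Proof.
move=> t0; have [dx _ _ dz] := traj _ t0.
apply: has_deriv_eq (has_derivB (has_deriv_mulmx T dx) dz) _.
rewrite /uio_error [dF D *m (_ - _)]mulmxBr [dF D *m (T *m _)]mulmxA uio_design_eq T_def.
by rewrite !(mulmxDr, mulmxN, mulmxA) F1_decoupled F2_decoupled L_Dac; mx_linear.
Qed.

End OneTrajectory.

Section TwoTrajectories.
Context {S1 S2 : signals R mu ma q1 q2 qw pa mc} {x1 x2 z1 z2 : R -> 'cV[R]_N}.
Context {zc1 zp1 zc2 zp2 : R -> 'cV[R]_nz}.
Hypotheses (traj1 : trajectory P D S1 x1 zc1 zp1 z1) (traj2 : trajectory P D S2 x2 zc2 zp2 z2).
Hypothesis same_noise : forall t, 0 <= t -> sw S1 t = sw S2 t.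
Hypotheses (x_init : x1 0 = x2 0) (zc_init : zc1 0 = zc2 0).
Hypotheses (zp_init : zp1 0 = zp2 0) (z_init : z1 0 = z2 0).

Let gap_diff s := (zp1 s - zc1 s) - (zp2 s - zc2 s).
Let error_diff s := uio_error x1 z1 s - uio_error x2 z2 s.

Let gap_diff0 : gap_diff 0 = 0.
Proof. by rewrite /gap_diff zp_init zc_init subrr. Qed.

Let error_diff0 : error_diff 0 = 0.
Proof. by rewrite /error_diff /uio_error x_init z_init subrr. Qed.

Let gap_diff_deriv (t : R) : 0 <= t ->
  has_deriv gap_diff t
    ((dFp D + dLp D) *m gap_diff t - dKp D *m pDa P *m (say S1 t - say S2 t)).
Proof.
move=> t0; apply: has_deriv_eq
  (has_derivB (filter_gap_deriv traj1 _ t0) (filter_gap_deriv traj2 _ t0)) _.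
by rewrite /gap_diff; mx_linear.
Qed.

Let error_diff_deriv (t : R) : 0 <= t ->
  has_deriv error_diff t (dF D *m error_diff t - dL D *m gap_diff t).
Proof.
move=> t0; apply: has_deriv_eq
  (has_derivB (uio_error_deriv traj1 _ t0) (uio_error_deriv traj2 _ t0)) _.
by rewrite /error_diff /gap_diff same_noise //; mx_linear.
Qed.

Let residual_diffE t :
  residual P D x1 z1 t - residual P D x2 z2 t = pC P *m error_diff t.
Proof. by rewrite /error_diff mulmxBr !residualE. Qed.

Lemma residual_decoupled :
  (forall t, 0 <= t -> say S1 t = say S2 t) ->
  forall t, 0 <= t -> residual P D x1 z1 t = residual P D x2 z2 t.
Proof.
move=> same_ay.
have gap0 : forall t, 0 <= t -> gap_diff t = 0.
  apply: (linear_ode_zero gap_diff0) => t t0.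
  by apply: has_deriv_eq (gap_diff_deriv _ t0) _; rewrite same_ay // subrr mulmx0 subr0.
have err0 : forall t, 0 <= t -> error_diff t = 0.
  apply: (linear_ode_zero error_diff0) => t t0.
  by apply: has_deriv_eq (error_diff_deriv _ t0) _; rewrite gap0 // mulmx0 subr0.
by move=> t t0; apply/eqP; rewrite -subr_eq0 residual_diffE err0 // mulmx0.
Qed.

Lemma residual_detects_sensor_attack :
  left_invertible (pC P) (dF D) (dL D) ->
  (forall t, 0 <= t -> residual P D x1 z1 t = residual P D x2 z2 t) ->
  forall t, 0 <= t -> dKp D *m pDa P *m say S1 t = dKp D *m pDa P *m say S2 t.
Proof.
move=> left_inv same_res.
have gap0 : forall t, 0 <= t -> gap_diff t = 0.
  move=> t t0; apply: oppr_inj; rewrite oppr0.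
  apply: (left_inv (fun s => - gap_diff s) error_diff error_diff0 _ _ t t0).
  - by move=> s s0; apply: has_deriv_eq (error_diff_deriv _ s0) _; rewrite mulmxN.
  - by move=> s s0; rewrite -residual_diffE same_res // subrr.
move=> t t0; apply/eqP; rewrite -subr_eq0 -mulmxBr -oppr_eq0; apply/eqP.
have := has_deriv_right_eq0 (fun s ts => gap0 s (le_trans t0 ts)) (gap_diff_deriv _ t0).
by rewrite gap0 // mulmx0 sub0r.
Qed.

End TwoTrajectories.
End ResidualSA.

Theorem proposition2 (R : realType) (n pf p mu ma q1 q2 qw ny pa nz mc : nat)
  (P : plant R (n + pf + p) mu ma q1 q2 qw ny pa nz mc)
  (D : design R (n + pf + p) ny nz) :
  (* standing assumption: the adversary does not access all channels *)
  (\rank (pDac P) < n)%N ->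
  (* UIO detector structure *)
  dK D = dK1 D + dK2 D ->
  dF D = pA P - dH D *m pC P *m pA P - dK1 D *m pC P ->
  dK2 D = dF D *m dH D ->
  (* design conditions for l = SA *)
  dT D = 1%:M - dH D *m pC P ->
  (1%:M - dH D *m pC P) *m pF1 P = 0 ->
  (1%:M - dH D *m pC P) *m pF2 P = 0 ->
  dL D *m pDac P = 0 ->
  dLp D *m pDac P = 0 ->
  left_invertible (pC P) (dF D) (dL D) ->
  hurwitz (block_mx (dF D) (- dL D) 0 (dFp D + dLp D)) ->
  (* 1) *)
  dTp D *m pBa P = 0 ->
  (* 2) Rosenbrock matrix [[sI - (Fp + Lp), Kp Da], [L, 0]] *)
  no_nmp_zero_dynamics (dFp D + dLp D) (- (dKp D *m pDa P)) (dL D) ->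
  (* 3) *)
  \rank (dL D *m dKp D *m pDa P) = \rank (dKp D *m pDa P) ->
  (* conclusion (i): res_SA is decoupled from a_u, f1, f2 *)
  (forall (S1 S2 : signals R mu ma q1 q2 qw pa mc)
          (x1 x2 z1 z2 : R -> 'cV[R]_(n + pf + p)) (zc1 zp1 zc2 zp2 : R -> 'cV[R]_nz),
     trajectory P D S1 x1 zc1 zp1 z1 ->
     trajectory P D S2 x2 zc2 zp2 z2 ->
     (forall t, 0 <= t -> su S1 t = su S2 t) ->
     (forall t, 0 <= t -> say S1 t = say S2 t) ->
     (forall t, 0 <= t -> sac S1 t = sac S2 t) ->
     (forall t, 0 <= t -> sw S1 t = sw S2 t) ->
     x1 0 = x2 0 -> zc1 0 = zc2 0 -> zp1 0 = zp2 0 -> z1 0 = z2 0 ->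
     forall t, 0 <= t -> residual P D x1 z1 t = residual P D x2 z2 t)
  /\
  (* conclusion (ii): res_SA is affected by a_y: a sensor attack leaving the
     residual unchanged has no effect on the side filters *)
  (forall (S1 S2 : signals R mu ma q1 q2 qw pa mc)
          (x1 x2 z1 z2 : R -> 'cV[R]_(n + pf + p)) (zc1 zp1 zc2 zp2 : R -> 'cV[R]_nz),
     trajectory P D S1 x1 zc1 zp1 z1 ->
     trajectory P D S2 x2 zc2 zp2 z2 ->
     (forall t, 0 <= t -> su S1 t = su S2 t) ->
     (forall t, 0 <= t -> sac S1 t = sac S2 t) ->
     (forall t, 0 <= t -> sw S1 t = sw S2 t) ->
     x1 0 = x2 0 -> zc1 0 = zc2 0 -> zp1 0 = zp2 0 -> z1 0 = z2 0 ->
     (forall t, 0 <= t -> residual P D x1 z1 t = residual P D x2 z2 t) ->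
     forall t, 0 <= t -> dKp D *m pDa P *m say S1 t = dKp D *m pDa P *m say S2 t).
Proof.
move=> _ K_split F_def K2_def T_def F1_dec F2_dec L_Dac Lp_Dac left_inv _ Tp_Ba _ _.
split=> S1 S2 x1 x2 z1 z2 zc1 zp1 zc2 zp2 traj1 traj2 _.
- move=> same_ay _ same_noise x_init zc_init zp_init z_init.
  exact: (residual_decoupled K_split F_def K2_def T_def F1_dec F2_dec L_Dac Lp_Dac
    Tp_Ba traj1 traj2 same_noise x_init zc_init zp_init z_init same_ay).
- move=> _ same_noise x_init _ _ z_init same_res.
  exact: (residual_detects_sensor_attack K_split F_def K2_def T_def F1_dec F2_dec
    L_Dac Lp_Dac Tp_Ba traj1 traj2 same_noise x_init z_init left_inv same_res).
Qed.
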